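(* Let $(U,V)$ be a pair of random variables taking values in finite sets $\mathcal{U}\times\mathcal{V}$ with joint probability mass function $p(u,v)$. Let $\mathcal{U}_1,\dots,\mathcal{U}_{\tilde N_u}$ be a partition of $\mathcal{U}$ into nonempty pairwise disjoint blocks and $\mathcal{V}_1,\dots,\mathcal{V}_{\tilde N_v}$ a partition of $\mathcal{V}$ into nonempty pairwise disjoint blocks (the synonymous mappings), with associated semantic variables $\tilde U,\tilde V$. Then (chain rule of semantic entropy) $$H_s(\tilde U)+H_s(\tilde V\mid U)\le H_s(\tilde U,\tilde V)\le H(U)+H_s(\tilde V\mid U)\le H(U,V).$$
   Context: For $p(\mathcal{U}_{i_s})=\sum_{u\in\mathcal{U}_{i_s}}p(u)$, the semantic entropy is $H_s(\tilde U)=-\sum_{i_s}p(\mathcal{U}_{i_s})\log p(\mathcal{U}_{i_s})$. The semantic joint entropy is $H_s(\tilde U,\tilde V)=-\sum_{i_s=1}^{\tilde N_u}\sum_{j_s=1}^{\tilde N_v}p(\mathcal{U}_{i_s}\times\mathcal{V}_{j_s})\log p(\mathcal{U}_{i_s}\times\mathcal{V}_{j_s})$, with $p(\mathcal{U}_{i_s}\times\mathcal{V}_{j_s})=\sum_{(u,v)\in\mathcal{U}_{i_s}\times\mathcal{V}_{j_s}}p(u,v)$. The semantic conditional entropy is $H_s(\tilde V\mid U)=-\sum_{u\in\mathcal{U}:p(u)>0}\sum_{j_s=1}^{\tilde N_v}p(u)\,p(\mathcal{V}_{j_s}\mid u)\log p(\mathcal{V}_{j_s}\mid u)$, with $p(\mathcal{V}_{j_s}\mid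 u)=\sum_{v\in\mathcal{V}_{j_s}}p(v\mid u)$ (the conditional synonymous mapping uses the same partition of $\mathcal{V}$ for every $u$). $H(U)$, $H(U,V)$ are Shannon entropies; logarithms are to base 2 and $0\log 0=0$. *)

From mathcomp Require Import all_boot all_order all_algebra.
From mathcomp Require Import all_classical all_reals exp.
Set Implicit Arguments. Unset Strict Implicit. Unset Printing Implicit Defensive.
Import Order.TTheory GRing.Theory Num.Theory.
Local Open Scope ring_scope.

Section Entropy.
Variables (R : realType) (U V : finType).

Definition log2 (x : R) : R := ln x / ln 2.

Definition plogp (x : R) : R := if x == 0 then 0 else x * log2 x.

Definition margU (p : {ffun U * V -> R}) (u : U) : R := \sum_(v : V) p (u, v).

Definition HU (p : {ffun U * V -> R}) : R := - \sum_(u : U) plogp (margU p u).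

Definition HUV (p : {ffun U * V -> R}) : R := - \sum_(uv : U * V) plogp (p uv).

Definition HsU (p : {ffun U * V -> R}) (PU : {set {set U}}) : R :=
  - \sum_(A in PU) plogp (\sum_(u in A) margU p u).

Definition HsUV (p : {ffun U * V -> R}) (PU : {set {set U}}) (PV : {set {set V}}) : R :=
  - \sum_(A in PU) \sum_(B in PV) plogp (\sum_(u in A) \sum_(v in B) p (u, v)).

Definition condV (p : {ffun U * V -> R}) (B : {set V}) (u : U) : R :=
  (\sum_(v in B) p (u, v)) / margU p u.

Definition HsV_U (p : {ffun U * V -> R}) (PV : {set {set V}}) : R :=
  - \sum_(u : U | 0 < margU p u) \sum_(B in PV) margU p u * plogp (condV p B u).

End Entropy.

From mathcomp Require Import all_boot all_order all_algebra.
From mathcomp Require Import all_classical all_reals exp.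
From mathcomp Require Import lra.
Set Implicit Arguments. Unset Strict Implicit. Unset Printing Implicit Defensive.
Import Order.TTheory GRing.Theory Num.Theory.
Local Open Scope ring_scope.

(* Write c(u, B) for the mass of {u} x B and T for the sum of c log c over all
   cells {u} x B.  The chain rule identity H(U) + H_s(~V|U) = -T is exact.
   Since x log x is superadditive on [0, +oo), merging cells can only increase
   the sum of x log x: merging {u} x B over u in a block A gives the middle
   inequality, splitting {u} x B into points the right one.  The left one is the
   log-sum inequality applied inside each block A x B. *)

Section Log2.
Variable R : realType.
Implicit Types a b c m t x y : R.

Lemma ln2_gt0 : 0 < ln (2 : R).
Proof. by rewrite ln_gt0 // ltr1n. Qed.

(* [ln 0 = 0] here, so the convention [0 log 0 = 0] holds automatically. *)
Lemma plogpE x : plogp x = x * log2 x.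
Proof. by rewrite /plogp; case: eqP => [->|_]; rewrite ?mul0r. Qed.

Lemma ler_log2 x y : 0 < x -> x <= y -> log2 x <= log2 y.
Proof.
move=> x_gt0 le_xy; rewrite ler_pM2r ?invr_gt0 ?ln2_gt0 //.
by rewrite ler_ln ?posrE // (lt_le_trans x_gt0).
Qed.

Lemma log2_div x y : 0 < x -> 0 < y -> log2 (x / y) = log2 x - log2 y.
Proof. by move=> x_gt0 y_gt0; rewrite /log2 ln_div ?posrE // mulrBl. Qed.

Lemma ln_le_subr1 x : 0 < x -> ln x <= x - 1.
Proof.
by move=> x_gt0; have := @le_ln1Dx R (x - 1); rewrite [1 + _]addrC subrK; apply; lra.
Qed.

Lemma plogp_addr_le a b : 0 <= a -> 0 <= b -> plogp a + plogp b <= plogp (a + b).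
Proof.
have le_log2D x y : 0 <= x -> 0 <= y -> x * log2 x <= x * log2 (x + y).
  rewrite le_eqVlt => /predU1P[<- _|x_gt0 y_ge0]; first by rewrite !mul0r.
  by rewrite ler_pM2l // ler_log2 // lerDl.
move=> a_ge0 b_ge0; rewrite !plogpE mulrDl.
by rewrite lerD // ?le_log2D // addrC le_log2D.
Qed.

Lemma plogp_sum_le (I : finType) (A : {pred I}) (g : I -> R) :
  (forall i, 0 <= g i) -> \sum_(i in A) plogp (g i) <= plogp (\sum_(i in A) g i).
Proof.
move=> g_ge0.
suff [] : \sum_(i in A) plogp (g i) <= plogp (\sum_(i in A) g i)
          /\ 0 <= \sum_(i in A) g i by [].
apply: (big_ind2 (fun x y => x <= plogp y /\ 0 <= y)) => //.
- by rewrite plogpE mul0r.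
- move=> x1 x2 y1 y2 [le1 y1_ge0] [le2 y2_ge0]; split; last exact: addr_ge0.
  exact: le_trans (lerD le1 le2) (plogp_addr_le y1_ge0 y2_ge0).
Qed.

Lemma mul_log2_div c m : 0 <= c -> c <= m -> c * log2 (c / m) = plogp c - c * log2 m.
Proof.
rewrite le_eqVlt => /predU1P[<-|c_gt0 le_cm]; first by rewrite plogpE !mul0r subr0.
by rewrite log2_div ?(lt_le_trans c_gt0) // plogpE mulrBr.
Qed.

Lemma mul_plogp_div c m : m != 0 -> m * plogp (c / m) = c * log2 (c / m).
Proof. by move=> m_neq0; rewrite plogpE mulrA [m * _]mulrC divfK. Qed.

(* The tangent bound [ln x <= x - 1] at [x = m t / c], multiplied by [c]. *)
Lemma log_sum_term c m t : 0 <= c -> c <= m -> 0 < t ->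
  c * log2 t + (c - m * t) / ln 2 <= c * log2 (c / m).
Proof.
rewrite le_eqVlt => /predU1P[<- m_ge0 t_gt0|c_gt0 le_cm t_gt0].
  rewrite !mul0r !add0r mulNr oppr_le0.
  by rewrite divr_ge0 ?(mulr_ge0 m_ge0 (ltW t_gt0)) ?(ltW ln2_gt0).
have m_gt0 : 0 < m := lt_le_trans c_gt0 le_cm.
have x_gt0 : 0 < m * t / c by rewrite divr_gt0 ?mulr_gt0.
have := ler_wpM2l (ltW c_gt0) (ln_le_subr1 x_gt0).
rewrite mulrBr mulr1 [c * (_ / c)]mulrC divfK ?gt_eqF //.
rewrite ln_div ?lnM ?posrE ?mulr_gt0 // => le_ln.
rewrite /log2 !mulrA -mulrDl ler_pM2r ?invr_gt0 ?ln2_gt0 //.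
rewrite ln_div ?posrE //; lra.
Qed.

Lemma log_sum_le (I : finType) (A : {pred I}) (c m : I -> R) :
  (forall i, 0 <= c i) -> (forall i, c i <= m i) ->
  (\sum_(i in A) c i) * log2 ((\sum_(i in A) c i) / \sum_(i in A) m i)
    <= \sum_(i in A) c i * log2 (c i / m i).
Proof.
move=> c_ge0 le_cm.
have : 0 <= \sum_(i in A) c i by apply: sumr_ge0.
rewrite le_eqVlt => /predU1P[sum_c0|sum_c_gt0].
  rewrite -sum_c0 mul0r big1 // => i Ai.
  by rewrite (psumr_eq0P (fun i _ => c_ge0 i) (esym sum_c0)) ?mul0r.
set C := \sum_(i in A) c i in sum_c_gt0 *.
set Q := \sum_(i in A) m i.
have le_CQ : C <= Q by apply: ler_sum.
have Q_gt0 : 0 < Q := lt_le_trans sum_c_gt0 le_CQ.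
have t_gt0 : 0 < C / Q by rewrite divr_gt0.
apply: le_trans (ler_sum _ (fun i _ => log_sum_term (c_ge0 i) (le_cm i) t_gt0)).
rewrite big_split /= -mulr_suml -mulr_suml sumrB -mulr_suml -/C -/Q.
by rewrite [Q * _]mulrC divfK ?gt_eqF // subrr mul0r addr0.
Qed.

End Log2.

Lemma sum_partition (M : nmodType) (T : finType) (P : {set {set T}}) (F : T -> M) :
  finset.partition P [set: T] -> \sum_x F x = \sum_(A in P) \sum_(x in A) F x.
Proof.
move=> P_partition; rewrite -(set_partition_big _ P_partition).
by apply: eq_bigl => x; rewrite finset.in_setT.
Qed.

Section SemanticEntropy.
Variables (R : realType) (U V : finType) (p : {ffun U * V -> R}).
Variables (PU : {set {set U}}) (PV : {set {set V}}).
Hypothesis p_ge0 : forall uv, 0 <= p uv.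
Hypothesis PU_partition : finset.partition PU [set: U].
Hypothesis PV_partition : finset.partition PV [set: V].

Definition margUB (u : U) (B : {set V}) : R := \sum_(v in B) p (u, v).

Lemma margUB_ge0 u B : 0 <= margUB u B.
Proof. exact: sumr_ge0. Qed.

Lemma margU_ge0 u : 0 <= margU p u.
Proof. exact: sumr_ge0. Qed.

Lemma margUB_le u B : margUB u B <= margU p u.
Proof. by rewrite /margU (bigID (mem B)) lerDl sumr_ge0. Qed.

Lemma sum_margUB u : \sum_(B in PV) margUB u B = margU p u.
Proof. by rewrite /margU (sum_partition _ PV_partition). Qed.

Lemma HsV_UE :
  HsV_U p PV = - \sum_u \sum_(B in PV) margUB u B * log2 (margUB u B / margU p u).
Proof.
rewrite /HsV_U [X in _ = - X](bigID (fun u => 0 < margU p u)) /=.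
rewrite [X in _ + X]big1 ?addr0 => [|u]; last first.
  rewrite lt_def margU_ge0 andbT negbK => /eqP m0.
  apply: big1 => B _; suff -> : margUB u B = 0 by rewrite mul0r.
  by apply/eqP; rewrite eq_le margUB_ge0 -m0 margUB_le.
congr (- _); apply: eq_bigr => u m_gt0; apply: eq_bigr => B _.
by rewrite mul_plogp_div ?gt_eqF.
Qed.

Lemma HU_add_HsV_UE : HU p + HsV_U p PV = - \sum_u \sum_(B in PV) plogp (margUB u B).
Proof.
rewrite HsV_UE /HU -opprD -big_split /=; congr (- _); apply: eq_bigr => u _.
under eq_bigr do rewrite mul_log2_div ?margUB_ge0 ?margUB_le //.
by rewrite sumrB -mulr_suml sum_margUB -plogpE addrC subrK.
Qed.

Lemma HsU_add_HsV_U_le : HsU p PU + HsV_U p PV <= HsUV p PU PV.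
Proof.
rewrite /HsU /HsUV HsV_UE (sum_partition _ PU_partition) -opprD -big_split /=.
rewrite lerN2; apply: ler_sum => A _.
set q := \sum_(u in A) margU p u.
have sum_B : \sum_(B in PV) \sum_(u in A) margUB u B = q.
  by rewrite exchange_big; apply: eq_bigr => u _; rewrite sum_margUB.
rewrite exchange_big /= plogpE -{1}sum_B mulr_suml -big_split /=.
apply: ler_sum => B _.
have le_q : \sum_(u in A) margUB u B <= q by apply: ler_sum => u _; apply: margUB_le.
have := log_sum_le A (margUB_ge0^~ B) (margUB_le^~ B).
rewrite mul_log2_div ?sumr_ge0 // => [|u _]; last exact: margUB_ge0.
rewrite -/q; lra.
Qed.

Lemma HsUV_le_HU_add_HsV_U : HsUV p PU PV <= HU p + HsV_U p PV.
Proof.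
rewrite /HsUV HU_add_HsV_UE lerN2 (sum_partition _ PU_partition).
apply: ler_sum => A _; rewrite exchange_big; apply: ler_sum => B _.
by apply: plogp_sum_le => u; apply: margUB_ge0.
Qed.

Lemma HU_add_HsV_U_le_HUV : HU p + HsV_U p PV <= HUV p.
Proof.
rewrite HU_add_HsV_UE /HUV lerN2.
have -> : \sum_uv plogp (p uv) = \sum_u \sum_v plogp (p (u, v)).
  by rewrite pair_bigA; apply: eq_bigr => -[].
apply: ler_sum => u _.
by rewrite (sum_partition _ PV_partition); apply: ler_sum => B _; apply: plogp_sum_le.
Qed.

End SemanticEntropy.

Unset Implicit Arguments.

Theorem theorem1 (R : realType) (U V : finType) (p : {ffun U * V -> R})
  (PU : {set {set U}}) (PV : {set {set V}}) :
  (forall uv, 0 <= p uv) -> \sum_(uv : U * V) p uv = 1 ->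
  finset.partition PU [set: U] -> finset.partition PV [set: V] ->
  HsU p PU + HsV_U p PV <= HsUV p PU PV /\
  HsUV p PU PV <= HU p + HsV_U p PV /\
  HU p + HsV_U p PV <= HUV p.
Proof.
move=> p_ge0 _ PU_partition PV_partition.
split; first exact: HsU_add_HsV_U_le.
split; first exact: HsUV_le_HU_add_HsV_U.
exact: HU_add_HsV_U_le_HUV.
Qed.
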